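(* Let $R$ be an associative ring with identity and involution $*$, and let $a\in R^{\#}\cap R^{\dagger}$. Then the following are equivalent: (1) $a\in R^{SEP}$; (2) $a(a^{\#})^*a^{\dagger}$ is a right $a^{\dagger}a^2$-idempotent; (3) $a^{\dagger}a^2$ is a left $a(a^{\#})^*a^{\dagger}$-idempotent; (4) $a^{\dagger}a^2$ is a right $a(a^{\#})^*a^{\dagger}$-idempotent.
   Context: An involution on $R$ is a map $x\mapsto x^*$ with $(x^* )^*=x$, $(x+y)^*=x^*+y^*$, $(xy)^*=y^*x^*$. An element $a$ is Moore–Penrose invertible if there is $b$ with $aba=a$, $bab=b$, $(ab)^*=ab$, $(ba)^*=ba$; such $b$ is unique, denoted $a^{\dagger}$, and $R^{\dagger}$ is the set of such $a$. An element $a$ is group invertible if there is $b$ with $aba=a$, $bab=b$, $ab=ba$; such $b$ is unique, denoted $a^{\#}$, and $R^{\#}$ is the set of such $a$. For $a\in R^{\#}\cap R^{\dagger}$, $a$ is SEP if $a^*=a^{\dagger}=a^{\#}$; $R^{SEP}$ denotes the set of SEP elements. For $e,c\in R$, $e$ is a left $c$-idempotent if $e^2=ce$, and a right $c$-idempotent if $e^2=ec$. *)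

From mathcomp Require Import all_boot all_algebra.
Set Implicit Arguments. Unset Strict Implicit. Unset Printing Implicit Defensive.
Import GRing.Theory.
Local Open Scope ring_scope.

Definition involution (R : pzRingType) (star : R -> R) : Prop :=
  [/\ forall x, star (star x) = x,
      forall x y, star (x + y) = star x + star y &
      forall x y, star (x * y) = star y * star x].

Definition is_mp_inv (R : pzRingType) (star : R -> R) (a b : R) : Prop :=
  [/\ a * b * a = a, b * a * b = b, star (a * b) = a * b & star (b * a) = b * a].

Definition is_group_inv (R : pzRingType) (a b : R) : Prop :=
  [/\ a * b * a = a, b * a * b = b & a * b = b * a].

Definition is_SEP (R : pzRingType) (star : R -> R) (a : R) : Prop :=
  exists b c, [/\ is_mp_inv star a b, is_group_inv a c, star a = b & b = c].

Definition left_c_idem (R : pzRingType) (c e : R) : Prop := e * e = c * e.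
Definition right_c_idem (R : pzRingType) (c e : R) : Prop := e * e = e * c.

From mathcomp Require Import all_boot all_algebra.
Import GRing.Theory.
Local Open Scope ring_scope.

(* Write x = a (a^#)^* a^+ and y = a^+ a^2.  If a is SEP then x = y = a, so all
   three identities hold trivially.  Conversely, multiplying each identity on
   suitable sides by a, a^+, a^# and a^* yields a a^+ = a a^# together with
   x = a.  The first equation makes a EP, i.e. a^+ = a^#, and then x = a reads
   a (a^#)^* a^# = a, which forces a^* = a^#. *)

Set Implicit Arguments.
Unset Strict Implicit.

Lemma mulr3_lctx {R : pzRingType} {u v w t : R} :
  u * v * w = t -> forall z, z * u * v * w = z * t.
Proof. by move=> <- z; rewrite !mulrA. Qed.

Lemma group_inv_unique (R : pzRingType) (a b c : R) :
  is_group_inv a b -> is_group_inv a c -> b = c.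
Proof.
move=> [aba bab abC] [aca cac acC].
have caE : c * a = b * a by rewrite -{1}aba !mulrA -mulrA -acC -abC mulrA aca.
by rewrite -cac caE -mulrA acC caE -abC mulrA bab.
Qed.

Section Involution.

Variables (R : pzRingType) (star : R -> R).
Hypotheses (starK : involutive star)
           (starM : forall x y, star (x * y) = star y * star x).

Lemma mp_inv_unique (a b c : R) :
  is_mp_inv star a b -> is_mp_inv star a c -> b = c.
Proof.
move=> [aba bab abS baS] [aca cac acS caS].
have abE : a * b = a * c.
  have -> : a * b = a * c * (a * b) by rewrite mulrA aca.
  by rewrite -acS -abS -starM mulrA aba.
have baE : b * a = c * a.
  have -> : b * a = b * a * (c * a) by rewrite mulrA (mulr3_lctx aca).
  by rewrite -caS -baS -starM mulrA (mulr3_lctx aba).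
by rewrite -bab baE -mulrA abE mulrA cac.
Qed.

Variables (a d g : R).
Hypotheses (mp : is_mp_inv star a d) (gi : is_group_inv a g).

Let ada : a * d * a = a. Proof. by case: mp. Qed.
Let dad : d * a * d = d. Proof. by case: mp. Qed.
Let adS : star (a * d) = a * d. Proof. by case: mp. Qed.
Let daS : star (d * a) = d * a. Proof. by case: mp. Qed.
Let aga : a * g * a = a. Proof. by case: gi. Qed.
Let gag : g * a * g = g. Proof. by case: gi. Qed.
Let agC : a * g = g * a. Proof. by case: gi. Qed.

Let gaa : g * a * a = a. Proof. by rewrite -agC aga. Qed.
Let aag : a * a * g = a. Proof. by rewrite -mulrA agC mulrA aga. Qed.
Let gga : g * g * a = g. Proof. by rewrite -mulrA -agC mulrA gag. Qed.

Lemma mp_inv_eq_group_inv : a * d = a * g -> d = g.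
Proof.
move=> adE.
have daad : d * a * (a * d) = d * a.
  by rewrite adE mulrA (mulr3_lctx aag).
have daE : d * a = a * d * (d * a).
  by rewrite -{1}daS -{1}daad starM adS daS.
have daadE : d * a = a * d.
  by rewrite daE adE agC -mulrA (mulrA a) ada.
by rewrite -dad daadE adE agC -mulrA adE mulrA gag.
Qed.

Lemma ad_eq_ag_of_da_eq_ag : d * a = a * g -> a * d = a * g.
Proof.
move=> daE.
have agS : star (a * g) = a * g by rewrite -daE daS.
have agad : a * g * (a * d) = a * g.
  have adag : a * d * (a * g) = a * g by rewrite mulrA ada.
  by rewrite -{1}agS -adS -starM adag agS.
by rewrite -{1}aga -mulrA agad.
Qed.

Local Notation x := (a * star g * d).
Local Notation y := (d * a ^+ 2).

Lemma SEP_of_EP : a * d = a * g -> x = a -> is_SEP star a.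
Proof.
move=> adE; have dg := mp_inv_eq_group_inv adE; subst d => agga.
exists g, g; split=> //.
have gS : star g = a * g * star g by rewrite -{1}gag -mulrA starM adS.
have agE : a * g = star g * g.
  by rewrite agC -{1}agga !mulrA -agC -gS.
by rewrite -{1}aga starM adS agE mulrA -starM -agC adS agC gag.
Qed.

Lemma SEP_x_y : is_SEP star a -> x = a /\ y = a.
Proof.
move=> [b [c [mpb gic aS bc]]].
have gc := group_inv_unique gi gic.
have dg : d = g by rewrite (mp_inv_unique mp mpb) bc gc.
have gS : star g = a by rewrite gc -bc -aS starK.
by rewrite gS dg expr2 mulrA aag gaa.
Qed.

Lemma right_idem_x_SEP : right_c_idem y x -> is_SEP star a.
Proof.
rewrite /right_c_idem expr2 => xxE.
have gda : g * d * a = g by rewrite -{1}gga (mulr3_lctx ada) gga.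
have daSg : d * a * star g = star g.
  by rewrite -{2}gda -[g * d * a]mulrA starM daS.
have aSgd : star a * star g * d = d.
  have dE : d = star a * star d * d by rewrite -{1}dad -daS starM.
  have aE : star a = star a * star g * star a.
    by rewrite -{1}aga starM starM mulrA.
  by rewrite {1}dE !mulrA -aE -dE.
have cancel_aSdx u : star a * (d * x * u) = d * u.
  by rewrite !mulrA (mulr3_lctx daSg) aSgd.
have Sgd : star g * d = d * d * a * a.
  have dxE : d * x = d * (d * (a * a)).
    rewrite -(cancel_aSdx x) -(cancel_aSdx (d * (a * a))); congr (_ * _).
    by rewrite -mulrA xxE mulrA.
  by move: dxE; rewrite !mulrA daSg.
have dE : d = star a * d * d * a * a by rewrite -{1}aSgd -mulrA Sgd !mulrA.
have dag : d * a * g = d by rewrite {1}dE (mulr3_lctx aag) -dE.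
have adE : a * d = a * g by rewrite -dag !mulrA ada.
apply: (SEP_of_EP adE).
by rewrite -mulrA Sgd (mp_inv_eq_group_inv adE) !mulrA (mulr3_lctx gga) aga.
Qed.

Lemma left_idem_y_SEP : left_c_idem x y -> is_SEP star a.
Proof.
rewrite /left_c_idem expr2 => yyE.
have daaE : d * a * a = x * d * a.
  move/(congr1 (fun t => t * g)): yyE.
  by rewrite !mulrA !(mulr3_lctx aag) (mulr3_lctx ada).
have ad_daa : a * d * (d * a * a) = d * a * a by rewrite {1}daaE !mulrA ada -daaE.
have add : a * d * d = d.
  rewrite -{3}dad -(mulr3_lctx aag) -ad_daa !mulrA.
  by rewrite (mulr3_lctx aag) (mulr3_lctx dad).
have agd : a * g * d = d by rewrite -{1}add !mulrA aga add.
have daE : d * a = a * g by rewrite -{1}agd agC (mulr3_lctx ada).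
have adE := ad_eq_ag_of_da_eq_ag daE.
apply: (SEP_of_EP adE).
rewrite (mp_inv_eq_group_inv adE) gaa (mulr3_lctx gga) in daaE.
by rewrite (mp_inv_eq_group_inv adE) -daaE.
Qed.

Lemma right_idem_y_SEP : right_c_idem x y -> is_SEP star a.
Proof.
rewrite /right_c_idem expr2 => yyE.
have xE : a = x.
  move/(congr1 (fun t => g * g * a * t)): yyE.
  by rewrite !mulrA !(mulr3_lctx ada) gga gaa.
have aad : a * a * d = a by rewrite {1}xE (mulr3_lctx dad) -xE.
have adE : a * d = a * g by rewrite -{1}gaa (mulr3_lctx aad) agC.
by apply: (SEP_of_EP adE); rewrite -xE.
Qed.

End Involution.

Theorem theorem3p3 (R : pzRingType) (star : R -> R) (a ad ag : R) :
  involution star -> is_mp_inv star a ad -> is_group_inv a ag ->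
  [/\ (is_SEP star a <-> right_c_idem (ad * a ^+ 2) (a * star ag * ad)),
      (is_SEP star a <-> left_c_idem (a * star ag * ad) (ad * a ^+ 2)) &
      (is_SEP star a <-> right_c_idem (a * star ag * ad) (ad * a ^+ 2))].
Proof.
move=> [starK _ starM] mp gi.
have fwd := SEP_x_y starK starM mp gi.
split; split=> [/fwd[-> ->] // |].
- exact: right_idem_x_SEP.
- exact: left_idem_y_SEP.
- exact: right_idem_y_SEP.
Qed.
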